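(* Consider the $D_3$-action on $U(\mathfrak{sl}_2)$ by algebra automorphisms with $\sigma:(E,F,H)\mapsto(\mathbf iF,-\mathbf iE,-H)$ and $\tau:(E,F,H)\mapsto\big(\tfrac{H-\mathbf iE-\mathbf iF}{2},\tfrac{H+\mathbf iE+\mathbf iF}{2},\mathbf iE-\mathbf iF\big)$, and the $D_3$-action on $\Re$ by algebra automorphisms with $\sigma:(A,B,C,\Delta)\mapsto(C,B,A,-\Delta)$ and $\tau:(A,B,C,\Delta)\mapsto(B,C,A,\Delta)$. Then for every $g\in D_3$, $g\circ\sharp=\sharp\circ g$ as maps $\Re\to U(\mathfrak{sl}_2)$.
   Context: All algebras are unital associative over $\mathbb C$, $[x,y]=xy-yx$, $\mathbf i=\sqrt{-1}$. $U(\mathfrak{sl}_2)$ is generated by $E,F,H$ with $[H,E]=2E$, $[H,F]=-2F$, $[E,F]=H$. $\Re$ is generated by $A,B,C,\Delta$ with $[A,B]=[B,C]=[C,A]=2\Delta$ and such that $[A,\Delta]+AC-BA$, $[B,\Delta]+BA-CB$, $[C,\Delta]+CB-AC$ are central. $D_3=\langle\sigma,\tau\mid \sigma^2=\tau^3=(\sigma\tau)^2=1\rangle$ (both displayed actions are known to be well-defined group actions by algebra automorphisms). $\sharp:\Re\to U(\mathfrak{sl}_2)$ is the unique algebra homomorphism with $A\mapsto \frac{(E+F-2)(E+F+2)}{16}$, $B\mapsto\frac{(H-2)(H+2)}{16}$, $C\mapsto\frac{(\mathbf iE-\mathbf iF-2)(\mathbf iE-\mathbf iF+2)}{16}$, $\Delta\mapsto\frac{(H+2)F^2-(H-2)E^2}{64}$.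 *)

From HB Require Import structures.
From mathcomp Require Import all_boot all_order all_algebra.
From mathcomp Require Import complex.
From mathcomp Require Import reals.
Set Implicit Arguments. Unset Strict Implicit. Unset Printing Implicit Defensive.
Import Order.TTheory GRing.Theory Num.Theory.
Local Open Scope ring_scope.

Section Defs.
Variable C : fieldType.

Definition commr (A : pzRingType) (x y : A) : A := x * y - y * x.

Definition is_alg_hom (A B : algType C) (f : A -> B) : Prop :=
  [/\ forall x y, f (x + y) = f x + f y,
      forall x y, f (x * y) = f x * f y,
      f 1 = 1 &
      forall (c : C) x, f (c *: x) = c *: f x].

Definition sl2_rel (A : algType C) (E F H : A) : Prop :=
  [/\ commr H E = 2%:R *: E, commr H F = - (2%:R *: F) & commr E F = H].

Definition is_Usl2 (U : algType C) (E F H : U) : Prop :=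
  sl2_rel E F H /\
  forall (B : algType C) (e f h : B), sl2_rel e f h ->
    (exists phi : U -> B, is_alg_hom phi /\ [/\ phi E = e, phi F = f & phi H = h])
    /\ (forall phi psi : U -> B, is_alg_hom phi -> is_alg_hom psi ->
          phi E = psi E -> phi F = psi F -> phi H = psi H -> phi =1 psi).

Definition comm4 (A : algType C) (a b c d z : A) : Prop :=
  [/\ commr z a = 0, commr z b = 0, commr z c = 0 & commr z d = 0].

Definition racah_rel (A : algType C) (a b c d : A) : Prop :=
  [/\ commr a b = 2%:R *: d, commr b c = 2%:R *: d & commr c a = 2%:R *: d] /\
  [/\ comm4 a b c d (commr a d + a * c - b * a),
      comm4 a b c d (commr b d + b * a - c * b) &
      comm4 a b c d (commr c d + c * b - a * c)].

Definition is_Racah (Re : algType C) (a b c d : Re) : Prop :=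
  racah_rel a b c d /\
  forall (B : algType C) (a' b' c' d' : B), racah_rel a' b' c' d' ->
    (exists phi : Re -> B, is_alg_hom phi /\
        [/\ phi a = a', phi b = b', phi c = c' & phi d = d'])
    /\ (forall phi psi : Re -> B, is_alg_hom phi -> is_alg_hom psi ->
          phi a = psi a -> phi b = psi b -> phi c = psi c -> phi d = psi d ->
          phi =1 psi).
End Defs.

(* Elements of D_3 = <sigma, tau | ...> are represented by words in the
   generators (true = sigma, false = tau); every element of the finite group
   D_3 is such a word.  The action of the word g1 g2 ... gk is the composite
   act(g1) o act(g2) o ... o act(gk). *)
Definition act_word (T : Type) (s t : T -> T) (w : seq bool) : T -> T :=
  foldr (fun (b : bool) (f : T -> T) => (if b then s else t) \o f) id w.

Definition iC (R : rcfType) : R[i] := Complex 0 1.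

From HB Require Import structures.
From mathcomp Require Import all_boot all_order all_algebra.
From mathcomp Require Import complex.
From mathcomp Require Import reals.
Import Order.TTheory GRing.Theory Num.Theory.
Local Open Scope ring_scope.
Set Implicit Arguments. Unset Strict Implicit.

(* Delta = [A,B]/2, so the Racah algebra is generated by A, B, C, and an
   algebra homomorphism out of it is determined by its values on A, B, C.
   Hence g o # = # o g only needs checking on A, B, C for g = sigma, tau.
   Each of A#, B#, C# is (y^2 - 4)/16 for y = E + F, H, iE - iF respectively;
   sigma sends these y to -(iE - iF), -H, -(E + F) and tau to H, iE - iF,
   E + F, matching the action of sigma and tau on A, B, C. *)

Lemma mulr_subn_addn (V : pzRingType) (y : V) (n : nat) :
  (y - n%:R) * (y + n%:R) = y ^+ 2 - (n ^ 2)%:R.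
Proof.
by rewrite mulrBl !mulrDr (commr_nat y n) opprD addrA addrK natrX -!expr2.
Qed.

Section AlgHom.
Variables (K : fieldType) (V W : algType K) (f : V -> W).
Hypothesis hf : is_alg_hom f.

Lemma alg_homD x y : f (x + y) = f x + f y. Proof. by case: hf. Qed.
Lemma alg_homM x y : f (x * y) = f x * f y. Proof. by case: hf. Qed.
Lemma alg_homZ c x : f (c *: x) = c *: f x. Proof. by case: hf. Qed.

Lemma alg_hom0 : f 0 = 0.
Proof. by apply: (@addrI _ (f 0)); rewrite -alg_homD !addr0. Qed.

Lemma alg_homN x : f (- x) = - f x.
Proof. by apply: (@addrI _ (f x)); rewrite -alg_homD !subrr alg_hom0. Qed.

Lemma alg_homB x y : f (x - y) = f x - f y.
Proof. by rewrite alg_homD alg_homN. Qed.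

Lemma alg_hom_nat n : f n%:R = n%:R.
Proof.
have [_ _ f1 _] := hf.
by elim: n => [|n IHn]; rewrite ?alg_hom0 // -addn1 !natrD alg_homD IHn f1.
Qed.

Lemma alg_hom_sqr_subn y n : f (y ^+ 2 - n%:R) = f y ^+ 2 - n%:R.
Proof. by rewrite alg_homB alg_hom_nat !expr2 alg_homM. Qed.

Lemma alg_hom_commr x y : f (commr x y) = commr (f x) (f y).
Proof. by rewrite /commr alg_homB !alg_homM. Qed.

Lemma alg_hom_racah_rel a b c d :
  racah_rel a b c d -> racah_rel (f a) (f b) (f c) (f d).
Proof.
case=> [[ab bc ca] [[s1 s2 s3 s4] [t1 t2 t3 t4] [u1 u2 u3 u4]]].
split; first by split; rewrite -alg_hom_commr ?ab ?bc ?ca alg_homZ.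
by split; split; rewrite -!(alg_hom_commr, alg_homM, alg_homB, alg_homD)
  ?s1 ?s2 ?s3 ?s4 ?t1 ?t2 ?t3 ?t4 ?u1 ?u2 ?u3 ?u4 alg_hom0.
Qed.

End AlgHom.

Lemma comp_alg_hom (K : fieldType) (V W X : algType K)
    (f : V -> W) (g : W -> X) :
  is_alg_hom f -> is_alg_hom g -> is_alg_hom (g \o f).
Proof.
case=> fD fM f1 fZ [gD gM g1 gZ]; split => /= [x y|x y||c x].
- by rewrite fD gD.
- by rewrite fM gM.
- by rewrite f1 g1.
- by rewrite fZ gZ.
Qed.

Lemma racah_relD (K : fieldType) (V : algType K) (a b c d : V) :
  (2%:R : K) != 0 -> racah_rel a b c d -> d = 2%:R^-1 *: commr a b.
Proof. by move=> h2 [[-> _ _] _]; rewrite scalerA mulVf // scale1r. Qed.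

Lemma is_Racah_hom_eq (K : fieldType) (Re V : algType K) (a b c d : Re)
    (phi psi : Re -> V) :
  (2%:R : K) != 0 -> is_Racah a b c d -> is_alg_hom phi -> is_alg_hom psi ->
  phi a = psi a -> phi b = psi b -> phi c = psi c -> phi =1 psi.
Proof.
move=> h2 [rel univ] hphi hpsi ea eb ec.
have [_ uniq] := univ V _ _ _ _ (alg_hom_racah_rel hphi rel).
apply: uniq => //; rewrite (racah_relD h2 rel).
by rewrite (alg_homZ hphi) (alg_homZ hpsi) (alg_hom_commr hphi)
  (alg_hom_commr hpsi) ea eb.
Qed.

Lemma act_word_comp (T T' : Type) (s t : T -> T) (s' t' : T' -> T')
    (f : T -> T') :
  (forall x, s' (f x) = f (s x)) -> (forall x, t' (f x) = f (t x)) ->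
  forall g x, act_word s' t' g (f x) = f (act_word s t g x).
Proof. by move=> fs ft; elim=> [|[] g IHg] x //=; rewrite IHg. Qed.

Section SharpEquivariance.
Variables (K : fieldType) (i : K).
Hypotheses (sqr_i_eq : i ^+ 2 = -1) (two_neq0 : (2%:R : K) != 0).
Variables (U : algType K) (E F H : U) (Re : algType K) (A B C D : Re).
Variable sharp : Re -> U.
Hypotheses (hRe : is_Racah A B C D) (hsharp : is_alg_hom sharp).
Hypothesis hsA : sharp A = (16%:R)^-1 *: ((E + F - 2%:R) * (E + F + 2%:R)).
Hypothesis hsB : sharp B = (16%:R)^-1 *: ((H - 2%:R) * (H + 2%:R)).
Hypothesis hsC : sharp C = (16%:R)^-1 *:
  ((i *: E - i *: F - 2%:R) * (i *: E - i *: F + 2%:R)).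

Lemma sharpA_sqr : sharp A = (16%:R)^-1 *: ((E + F) ^+ 2 - 4%:R).
Proof. by rewrite hsA mulr_subn_addn. Qed.

Lemma sharpB_sqr : sharp B = (16%:R)^-1 *: (H ^+ 2 - 4%:R).
Proof. by rewrite hsB mulr_subn_addn. Qed.

Lemma sharpC_sqr : sharp C = (16%:R)^-1 *: ((i *: E - i *: F) ^+ 2 - 4%:R).
Proof. by rewrite hsC mulr_subn_addn. Qed.

Lemma scale_i_i (u : U) : i *: (i *: u) = - u.
Proof. by rewrite scalerA -expr2 sqr_i_eq scaleN1r. Qed.

Lemma scale_half_double (u : U) : 2%:R^-1 *: (u + u) = u.
Proof. by rewrite -mulr2n -scaler_nat scalerA mulVf // scale1r. Qed.

Lemma sharp_hom_eq (s : U -> U) (t : Re -> Re) :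
  is_alg_hom s -> is_alg_hom t ->
  s (sharp A) = sharp (t A) -> s (sharp B) = sharp (t B) ->
  s (sharp C) = sharp (t C) -> forall x, s (sharp x) = sharp (t x).
Proof.
move=> hs ht eA eB eC.
exact: (is_Racah_hom_eq two_neq0 hRe (comp_alg_hom hsharp hs)
  (comp_alg_hom ht hsharp)).
Qed.

Section Sigma.
Variables (sigU : U -> U) (sigR : Re -> Re).
Hypotheses (hsigU : is_alg_hom sigU) (hsigR : is_alg_hom sigR).
Hypotheses (hsigUE : sigU E = i *: F) (hsigUF : sigU F = - (i *: E)).
Hypothesis hsigUH : sigU H = - H.
Hypotheses (hsigRA : sigR A = C) (hsigRB : sigR B = B) (hsigRC : sigR C = A).

Lemma sigma_sharp x : sigU (sharp x) = sharp (sigR x).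
Proof.
have sigEF : sigU (E + F) = - (i *: E - i *: F).
  by rewrite (alg_homD hsigU) hsigUE hsigUF opprB addrC.
have sigX : sigU (i *: E - i *: F) = - (E + F).
  rewrite (alg_homB hsigU) !(alg_homZ hsigU) hsigUE hsigUF scalerN.
  by rewrite !scale_i_i opprK opprD addrC.
apply: sharp_hom_eq hsigU hsigR _ _ _ x;
  by rewrite ?hsigRA ?hsigRB ?hsigRC ?sharpA_sqr ?sharpB_sqr ?sharpC_sqr
    (alg_homZ hsigU) (alg_hom_sqr_subn hsigU) ?sigEF ?sigX ?hsigUH sqrrN.
Qed.

End Sigma.

Section Tau.
Variables (tauU : U -> U) (tauR : Re -> Re).
Hypotheses (htauU : is_alg_hom tauU) (htauR : is_alg_hom tauR).
Hypothesis htauUE : tauU E = (2%:R)^-1 *: (H - i *: E - i *: F).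
Hypothesis htauUF : tauU F = (2%:R)^-1 *: (H + i *: E + i *: F).
Hypothesis htauUH : tauU H = i *: E - i *: F.
Hypotheses (htauRA : tauR A = B) (htauRB : tauR B = C) (htauRC : tauR C = A).

Lemma tau_sharp x : tauU (sharp x) = sharp (tauR x).
Proof.
have tauE : tauU E = 2%:R^-1 *: (H - i *: (E + F)).
  by rewrite htauUE -addrA -opprD -scalerDr.
have tauF : tauU F = 2%:R^-1 *: (H + i *: (E + F)).
  by rewrite htauUF -addrA -scalerDr.
have tauEF : tauU (E + F) = H.
  rewrite (alg_homD htauU) tauE tauF -scalerDr addrACA addNr addr0.
  exact: scale_half_double.
have tauX : tauU (i *: E - i *: F) = E + F.
  rewrite (alg_homB htauU) !(alg_homZ htauU) -scalerBr tauE tauF -scalerBr.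
  rewrite opprD addrACA subrr add0r -opprD scalerN scale_half_double.
  by rewrite scalerN scale_i_i opprK.
apply: sharp_hom_eq htauU htauR _ _ _ x;
  by rewrite ?htauRA ?htauRB ?htauRC ?sharpA_sqr ?sharpB_sqr ?sharpC_sqr
    (alg_homZ htauU) (alg_hom_sqr_subn htauU) ?tauEF ?tauX ?htauUH.
Qed.

End Tau.

End SharpEquivariance.

Theorem theorem3p2 (R : realType)
  (U : algType R[i]) (E F H : U) (hU : is_Usl2 E F H)
  (Re : algType R[i]) (A B C D : Re) (hRe : is_Racah A B C D)
  (sharp : Re -> U) (hsharp : is_alg_hom sharp)
  (hsA : sharp A = (16%:R)^-1 *: ((E + F - 2%:R) * (E + F + 2%:R)))
  (hsB : sharp B = (16%:R)^-1 *: ((H - 2%:R) * (H + 2%:R)))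
  (hsC : sharp C = (16%:R)^-1 *:
            ((iC R *: E - iC R *: F - 2%:R) * (iC R *: E - iC R *: F + 2%:R)))
  (hsD : sharp D = (64%:R)^-1 *:
            ((H + 2%:R) * F ^+ 2 - (H - 2%:R) * E ^+ 2))
  (sigU tauU : U -> U) (hsigU : is_alg_hom sigU) (htauU : is_alg_hom tauU)
  (hsigUE : sigU E = iC R *: F) (hsigUF : sigU F = - (iC R *: E))
  (hsigUH : sigU H = - H)
  (htauUE : tauU E = (2%:R)^-1 *: (H - iC R *: E - iC R *: F))
  (htauUF : tauU F = (2%:R)^-1 *: (H + iC R *: E + iC R *: F))
  (htauUH : tauU H = iC R *: E - iC R *: F)
  (sigR tauR : Re -> Re) (hsigR : is_alg_hom sigR) (htauR : is_alg_hom tauR)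
  (hsigRA : sigR A = C) (hsigRB : sigR B = B) (hsigRC : sigR C = A)
  (hsigRD : sigR D = - D)
  (htauRA : tauR A = B) (htauRB : tauR B = C) (htauRC : tauR C = A)
  (htauRD : tauR D = D) :
  forall (g : seq bool) (x : Re),
    act_word sigU tauU g (sharp x) = sharp (act_word sigR tauR g x).
Proof.
have two_neq0 : (2%:R : R[i]) != 0 by rewrite pnatr_eq0.
apply: act_word_comp => x.
- exact: (sigma_sharp (sqr_i R) two_neq0 hRe hsharp hsA hsB hsC hsigU hsigR
    hsigUE hsigUF hsigUH hsigRA hsigRB hsigRC).
- exact: (tau_sharp (sqr_i R) two_neq0 hRe hsharp hsA hsB hsC htauU htauR
    htauUE htauUF htauUH htauRA htauRB htauRC).
Qed.
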